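(* Let $d\in\mathbb{Z}_{>0}$ and $X=\begin{pmatrix}z\sqrt\epsilon&u\sqrt\epsilon\\ v\sqrt\epsilon&z\sqrt\epsilon\end{pmatrix}\in\mathfrak{k}_{-d}$ with $z,u,v\in F$ such that $\nu(z),\nu(v)>-\lceil\frac d2\rceil$ and $\nu(u)=-d$. Let $X_u=\begin{pmatrix}0&u\sqrt\epsilon\\0&0\end{pmatrix}$. Then $\Psi_X=\Psi_{X_u}$ as characters of $\mathcal{J}_d$, and $T(X)\mathcal{J}_d=T(X_u)\mathcal{J}_d=Z\mathcal{U}\mathcal{J}_d$.
   Context: $F$ non-archimedean local field, $p\neq2$, uniformiser $\varpi$, valuation $\nu$; $E=F[\sqrt\epsilon]$ unramified quadratic. $G=\mathbb{U}(1,1)(F)$ (hermitian form $\mathrm{w}=\begin{pmatrix}0&1\\1&0\end{pmatrix}$) with center $Z$ (scalar matrices, $\cong E^1$), $\mathcal{K}=G\cap M_2(\mathcal{O}_E)$, $\mathcal{U}=\left\{\begin{pmatrix}1&\sqrt\epsilon b\\0&1\end{pmatrix}:b\in F\right\}\cap\mathcal{K}$. $\mathfrak{k}_{-d}$: elements of the Lie algebra with diagonal entries in $\mathfrak{p}_E^{-d}$ and off-diagonal entries in $\sqrt\epsilon\mathfrak{p}_F^{-d}$. $\mathcal{J}_d=\begin{pmatrix}1+\mathfrak{p}_E^{\lceil d/2\rceil}&\mathfrak{p}_E^{\lceil d/2\rceil}\\ \mathfrak{p}_E^{\lceil (d+1)/2\rceil}&1+\mathfrak{p}_E^{\lceil d/2\rceil}\end{pmatrix}\cap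 G$. $\psi$: additive character of $E$ trivial on $\mathfrak{p}_E$, nontrivial on $\mathcal{O}_E$; $\Psi_Y(k)=\psi(\mathrm{Tr}(Y(k-I)))$. $T(Y)$ denotes the centralizer of $Y$ in $\mathcal{K}$. *)

From HB Require Import structures.
From mathcomp Require Import all_boot all_order all_algebra algC.
Set Implicit Arguments. Unset Strict Implicit. Unset Printing Implicit Defensive.
Import Order.TTheory GRing.Theory Num.Theory.
Local Open Scope ring_scope.

(* nu : F -> int is the valuation on nonzero elements (its value at 0 is junk).
   [inP nu n x] means x \in p_F^n, i.e. x = 0 or nu x >= n (n : int). *)
Definition inP (F : fieldType) (nu : F -> int) (n : int) (x : F) : Prop :=
  x = 0 \/ n <= nu x.

Record nonarch_local_field (F : fieldType) (nu : F -> int) : Prop := {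
  nuM : forall x y : F, x != 0 -> y != 0 -> nu (x * y) = nu x + nu y;
  nuD : forall x y : F, x != 0 -> y != 0 -> x + y != 0 ->
          Num.min (nu x) (nu y) <= nu (x + y);
  nu_unif : exists varpi : F, varpi != 0 /\ nu varpi = 1;
  nu_complete : forall a : nat -> F,
     (forall N : int, exists M : nat, forall m n : nat, (M <= m)%N -> (M <= n)%N ->
          inP nu N (a m - a n)) ->
     exists l : F, forall N : int, exists M : nat, forall n : nat, (M <= n)%N ->
          inP nu N (a n - l);
  residue_finite : exists r : seq F, forall x : F, inP nu 0 x ->
          exists2 y, y \in r & inP nu 1 (x - y);
  residue_char_not2 : (2 : F) != 0 /\ nu 2 = 0
}.

Record unram_quad (F E : fieldType) (nu : F -> int) (iota : {rmorphism F -> E})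
    (eps : F) (s : E) (sigma : {rmorphism E -> E}) : Prop := {
  eps_unit : eps != 0 /\ nu eps = 0;
  eps_nonsq : forall a : F, a ^+ 2 != eps;
  s_sq : s ^+ 2 = iota eps;
  E_span : forall e : E, exists a b : F, e = iota a + iota b * s;
  sigma_F : forall a : F, sigma (iota a) = iota a;
  sigma_s : sigma s = - s
}.

(* p_E^n : a + b sqrt eps with a, b in p_F^n (E/F unramified) *)
Definition pE (F E : fieldType) (nu : F -> int) (iota : {rmorphism F -> E}) (s : E)
    (n : int) (e : E) : Prop :=
  exists a b : F, e = iota a + iota b * s /\ inP nu n a /\ inP nu n b.

Record add_char (F E : fieldType) (nu : F -> int) (iota : {rmorphism F -> E}) (s : E)
    (psi : E -> algC) : Prop := {
  psiD : forall x y : E, psi (x + y) = psi x * psi y;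
  psi_pE : forall x : E, pE nu iota s 1 x -> psi x = 1;
  psi_OE : exists x : E, pE nu iota s 0 x /\ psi x != 1
}.

Definition mx2 (R : Type) (a b c d : R) : 'M[R]_2 :=
  \matrix_(i < 2, j < 2)
    if (i == 0 :> nat) then (if (j == 0 :> nat) then a else b)
    else (if (j == 0 :> nat) then c else d).

Definition wform (E : fieldType) : 'M[E]_2 := mx2 0 1 1 0.

Definition adjm (E : fieldType) (sigma : {rmorphism E -> E}) (g : 'M[E]_2) : 'M[E]_2 :=
  (map_mx sigma g)^T.

Definition inG (E : fieldType) (sigma : {rmorphism E -> E}) (g : 'M[E]_2) : Prop :=
  adjm sigma g *m wform E *m g = wform E.

Definition inK (F E : fieldType) (nu : F -> int) (iota : {rmorphism F -> E}) (s : E)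
    (sigma : {rmorphism E -> E}) (g : 'M[E]_2) : Prop :=
  inG sigma g /\ forall i j, pE nu iota s 0 (g i j).

Definition inZ (E : fieldType) (sigma : {rmorphism E -> E}) (g : 'M[E]_2) : Prop :=
  (exists l : E, g = l%:M) /\ inG sigma g.

Definition inU (F E : fieldType) (nu : F -> int) (iota : {rmorphism F -> E}) (s : E)
    (sigma : {rmorphism E -> E}) (g : 'M[E]_2) : Prop :=
  (exists b : F, g = mx2 1 (s * iota b) 0 1) /\ inK nu iota s sigma g.

Definition inJ (F E : fieldType) (nu : F -> int) (iota : {rmorphism F -> E}) (s : E)
    (sigma : {rmorphism E -> E}) (d : nat) (g : 'M[E]_2) : Prop :=
  inG sigma g /\
  exists a b c e : E, g = mx2 a b c e /\
    pE nu iota s (Posz (uphalf d)) (a - 1) /\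
    pE nu iota s (Posz (uphalf d)) b /\
    pE nu iota s (Posz (uphalf d.+1)) c /\
    pE nu iota s (Posz (uphalf d)) (e - 1).

Definition inLie (E : fieldType) (sigma : {rmorphism E -> E}) (X : 'M[E]_2) : Prop :=
  adjm sigma X *m wform E + wform E *m X = 0.

Definition in_kfrak (F E : fieldType) (nu : F -> int) (iota : {rmorphism F -> E}) (s : E)
    (sigma : {rmorphism E -> E}) (d : nat) (X : 'M[E]_2) : Prop :=
  inLie sigma X /\
  exists a b c e : E, X = mx2 a b c e /\
    pE nu iota s (- Posz d) a /\ pE nu iota s (- Posz d) e /\
    (exists b' : F, b = s * iota b' /\ inP nu (- Posz d) b') /\
    (exists c' : F, c = s * iota c' /\ inP nu (- Posz d) c').

Definition inT (F E : fieldType) (nu : F -> int) (iota : {rmorphism F -> E}) (s : E)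
    (sigma : {rmorphism E -> E}) (Y k : 'M[E]_2) : Prop :=
  inK nu iota s sigma k /\ k *m Y = Y *m k.

Definition PsiY (E : fieldType) (psi : E -> algC) (Y k : 'M[E]_2) : algC :=
  psi (\tr (Y *m (k - 1%:M))).

Definition setmul (E : fieldType) (A B : 'M[E]_2 -> Prop) (g : 'M[E]_2) : Prop :=
  exists a b, A a /\ B b /\ g = a *m b.

From HB Require Import structures.
From mathcomp Require Import all_boot all_order all_algebra algC.
From mathcomp Require Import zify ring.
Set Implicit Arguments. Unset Strict Implicit. Unset Printing Implicit Defensive.
Import Order.TTheory GRing.Theory Num.Theory.
Local Open Scope ring_scope.

(* For k in J_d the entries of k - 1 lie in p^ceil(d/2), and even in p^ceil((d+1)/2) below
   the diagonal, so Tr((X - X_u)(k - 1)) lies in p_E and psi does not see it.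
   An element of K commutes with [x y; w y x] (y <> 0) exactly when it has the shape
   [a b; w b a]; so T(X) and T(X_u) are the integral unitary matrices of this shape for
   w = v/u and w = 0, both in p^ceil((d+1)/2).  To pass from w to w', replace the lower left
   entry w b by w' b and rescale by the inverse square root rho (Hensel) of the principal
   unit 1 + (w' - w) N(b) of F: the result is again unitary, integral and congruent to the
   original matrix modulo p^ceil((d+1)/2), so the two differ by an element of J_d.
   Finally [a b; 0 a] with N(a) = 1 is the central element a times the unipotent
   [1 c; 0 1] with c = sigma(a) b, which has trace zero and hence lies in sqrt(eps) O_F. *)

Section Valuation.
Variables (F : fieldType) (nu : F -> int).
Hypothesis HF : nonarch_local_field nu.

Lemma nu1 : nu 1 = 0.
Proof.
have := nuM HF (oner_neq0 F) (oner_neq0 F); rewrite mulr1 => nu11.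
by apply: (addrI (nu 1)); rewrite addr0 -nu11.
Qed.

Lemma nuN x : x != 0 -> nu (- x) = nu x.
Proof.
have N1 : (-1 : F) != 0 by rewrite oppr_eq0 oner_eq0.
have := nuM HF N1 N1; rewrite mulrNN mulr1 nu1 => nuN1 x0.
by rewrite -mulN1r (nuM HF N1 x0); lia.
Qed.

Lemma nuV x : x != 0 -> nu x^-1 = - nu x.
Proof. by move=> x0; have := nuM HF (invr_neq0 x0) x0; rewrite mulVf // nu1; lia. Qed.

Lemma inP0 n : inP nu n 0. Proof. by left. Qed.

Lemma inP1 : inP nu 0 1. Proof. by right; rewrite nu1. Qed.

Lemma inPW n m x : n <= m -> inP nu m x -> inP nu n x.
Proof. by move=> le_nm [->|h]; [left | right; apply: le_trans h]. Qed.

Lemma inPN n x : inP nu n x -> inP nu n (- x).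
Proof.
case: (eqVneq x 0) => [-> _|x0 [/eqP|]]; rewrite ?oppr0 ?(negbTE x0) //; first exact: inP0.
by right; rewrite nuN.
Qed.

Lemma inPD n x y : inP nu n x -> inP nu n y -> inP nu n (x + y).
Proof.
case=> [->|hx]; first by rewrite add0r.
case=> [->|hy]; first by rewrite addr0; right.
case: (eqVneq x 0) => [->|x0]; first by rewrite add0r; right.
case: (eqVneq y 0) => [->|y0]; first by rewrite addr0; right.
case: (eqVneq (x + y) 0) => [->|xy0]; first exact: inP0.
by right; apply: le_trans (nuD HF x0 y0 xy0); rewrite le_min hx hy.
Qed.

Lemma inPB n x y : inP nu n x -> inP nu n y -> inP nu n (x - y).
Proof. by move=> hx /inPN; apply: inPD. Qed.

Lemma inPM n m x y : inP nu n x -> inP nu m y -> inP nu (n + m) (x * y).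
Proof.
case: (eqVneq x 0) => [-> _ _|x0]; first by rewrite mul0r; apply: inP0.
case: (eqVneq y 0) => [-> _ _|y0]; first by rewrite mulr0; apply: inP0.
case=> [/eqP|hx]; first by rewrite (negbTE x0).
case=> [/eqP|hy]; first by rewrite (negbTE y0).
by right; rewrite (nuM HF x0 y0) lerD.
Qed.

Lemma inP_unitMl n x y : x != 0 -> nu x = 0 -> inP nu n y -> inP nu n (x * y).
Proof. by move=> x0 nux /(inPM (_ : inP nu 0 x)); rewrite add0r; apply; right; rewrite nux. Qed.

Lemma inP_eq0 x : (forall N, inP nu N x) -> x = 0.
Proof. by move=> h; case: (h (nu x + 1)) => //; lia. Qed.

Lemma inP_div2 n x : inP nu n x -> inP nu n (x / 2).
Proof.
have [two0 nu2] := residue_char_not2 HF.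
by rewrite mulrC; apply: inP_unitMl; rewrite ?invr_eq0 ?nuV // nu2.
Qed.

Lemma not_inP1_1 : ~ inP nu 1 1.
Proof. by case=> [/eqP|]; rewrite ?oner_eq0 // nu1. Qed.

Lemma principal_unit m r : 1 <= m -> inP nu m (r - 1) -> r != 0 /\ nu r = 0.
Proof.
move=> m_ge1 /(inPW m_ge1) r1.
have r0 : r != 0.
  by apply: contraPneq r1 => ->; rewrite sub0r => /inPN; rewrite opprK; apply: not_inP1_1.
split=> //; have := inPD (inPW ler01 r1) inP1; rewrite subrK.
case=> [/eqP|nur]; first by rewrite (negbTE r0).
apply/eqP; rewrite eq_le nur andbT leNgt; apply/negP => nur1.
apply: not_inP1_1; have -> : (1 : F) = r - (r - 1) by rewrite opprB addrC subrK.
by apply: inPB r1; right; lia.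
Qed.

Lemma principal_unitV m r : 1 <= m -> inP nu m (r - 1) -> inP nu m (r^-1 - 1).
Proof.
move=> m_ge1 r1; have [r0 nur] := principal_unit m_ge1 r1.
have -> : r^-1 - 1 = r^-1 * - (r - 1) by rewrite mulrN mulrBr mulVf // mulr1 opprB.
by apply: inP_unitMl; rewrite ?invr_eq0 ?nuV ?nur //; apply: inPN.
Qed.

(* Iterating y |-> (x - y^2)/2, whose fixed points satisfy (1 + y)^2 = 1 + x. *)
Fixpoint hensel_seq (x : F) (k : nat) : F :=
  if k is k'.+1 then (x - hensel_seq x k' ^+ 2) / 2 else 0.

Section Hensel.
Variables (m : int) (x : F).
Hypotheses (m_ge1 : 1 <= m) (x_in : inP nu m x).
Local Notation y := (hensel_seq x).

Lemma hensel_seq_in k : inP nu m (y k).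
Proof.
elim: k => [|k IH] /=; first exact: inP0.
by apply/inP_div2/inPB => //; rewrite expr2; apply: inPW (inPM IH IH); lia.
Qed.

Lemma hensel_seq_step k : inP nu (k%:Z + m) (y k.+1 - y k).
Proof.
elim: k => [|k IH].
  by rewrite /= expr2 mulr0 !subr0; apply: inPW (inP_div2 x_in); lia.
have -> : y k.+2 - y k.+1 = (y k - y k.+1) * (y k + y k.+1) / 2.
  by rewrite /= -mulrBl; congr (_ / 2); ring.
apply: inP_div2; rewrite -opprB mulNr; apply: inPN.
by apply: inPW (inPM IH (inPD (hensel_seq_in k) (hensel_seq_in k.+1))); lia.
Qed.

Lemma hensel_seq_cauchy a j : inP nu (a%:Z + m) (y (a + j) - y a).
Proof.
elim: j => [|j IH]; first by rewrite addn0 subrr; apply: inP0.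
have -> : y (a + j.+1) - y a = (y (a + j).+1 - y (a + j)) + (y (a + j) - y a).
  by rewrite addnS; ring.
by apply: inPD (inPW _ (hensel_seq_step _)) IH; lia.
Qed.

Lemma hensel_seq_cvg :
  exists2 l, inP nu m l & forall N, exists M, forall k, (M <= k)%N -> inP nu N (y k - l).
Proof.
have [l yl] : exists l, forall N, exists M, forall k, (M <= k)%N -> inP nu N (y k - l).
  apply: (nu_complete HF) => N; exists `|N|%N => i j Ni Nj.
  have -> : y i - y j = (y (`|N| + (i - `|N|)) - y `|N|) - (y (`|N| + (j - `|N|)) - y `|N|).
    by rewrite !subnKC //; ring.
  by apply: inPW (inPB (hensel_seq_cauchy _ _) (hensel_seq_cauchy _ _)); lia.
exists l => //; have [M yMl] := yl m.
by rewrite -[l](subKr (y M)); apply: inPB (hensel_seq_in M) (yMl M (leqnn M)).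
Qed.

Lemma hensel_sqrt1p : exists r, r ^+ 2 = 1 + x /\ inP nu m (r - 1).
Proof.
have [l l_in yl] := hensel_seq_cvg.
exists (1 + l); split; last by rewrite addrAC subrr add0r.
apply/eqP; rewrite -subr_eq0; apply/eqP; apply: inP_eq0 => N.
have [M yMl] := yl `|N|%N; have [two0 nu2] := residue_char_not2 HF.
have twoy : 2 * y M.+1 = x - y M ^+ 2 by rewrite /= mulrC divfK.
have -> : (1 + l) ^+ 2 - (1 + x) = 2 * (l - y M.+1) + (l - y M) * (l + y M).
  by rewrite mulrBr twoy; ring.
apply: (@inPW _ `|N|%N); first by rewrite abszE ler_norm.
apply: inPD; first by apply: inP_unitMl => //; rewrite -opprB; apply/inPN/yMl.
rewrite -[X in inP _ X _]addr0; apply: inPM; first by rewrite -opprB; apply/inPN/yMl.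
by apply: inPD (inPW _ l_in) (inPW _ (hensel_seq_in M)); lia.
Qed.

End Hensel.

Lemma principal_unit_invsqrt m x : 1 <= m -> inP nu m x ->
  exists2 rho, inP nu m (rho - 1) & rho * rho * (1 + x) = 1.
Proof.
move=> m_ge1 x_in; have [r [r2 r1]] := hensel_sqrt1p m_ge1 x_in.
have [r0 _] := principal_unit m_ge1 r1.
exists r^-1; first exact: principal_unitV.
by rewrite -r2 -expr2 exprVn mulVf // expf_neq0.
Qed.

Lemma norm1_integral eps p q : eps != 0 -> nu eps = 0 -> (forall a : F, a ^+ 2 != eps) ->
  p ^+ 2 - eps * q ^+ 2 = 1 -> inP nu 0 p /\ inP nu 0 q.
Proof.
move=> eps0 nueps eps_nsq pq1.
have epsq : eps * q ^+ 2 = p ^+ 2 - 1 by rewrite -pq1 opprB addrC subrK.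
have p_int : inP nu 0 p.
  case: (eqVneq p 0) => [->|p0]; first exact: inP0.
  case: (lerP 0 (nu p)) => [|nup]; first by right.
  have q0 : q != 0.
    apply: contraPneq pq1 => ->; rewrite expr0n mulr0 subr0 expr2 => pp1.
    by have := nuM HF p0 p0; rewrite pp1 nu1; lia.
  have [|r [r2 _]] := @hensel_sqrt1p 1 (- (p^-1 * p^-1)) (lexx _).
    by apply: inPN; right; rewrite (nuM HF) ?invr_eq0 // nuV //; lia.
  case/negP: (eps_nsq (r * p / q)).
  have -> : eps = (p ^+ 2 - 1) / q ^+ 2 by rewrite -epsq mulfK // expf_neq0.
  by rewrite !exprMn r2 exprVn; apply/eqP; field; rewrite p0 q0.
split=> //; case: (eqVneq q 0) => [->|q0]; [exact: inP0 | right].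
have : inP nu 0 (p ^+ 2 - 1) by apply: inPB inP1; rewrite expr2 -[0](addr0 0); apply: inPM.
rewrite -epsq; case=> [/eqP|]; first by rewrite mulf_eq0 (negbTE eps0) expf_eq0 (negbTE q0).
by rewrite (nuM HF) ?expf_neq0 // nueps add0r expr2 (nuM HF) //; lia.
Qed.

End Valuation.

Section Matrix2.
Variable E : fieldType.
Implicit Types (g h k : 'M[E]_2).

Lemma ord2_cases (i : 'I_2) : i = 0 \/ i = 1.
Proof. by case: i => [[|[|//]] ?]; [left | right]; apply: val_inj. Qed.

Lemma mx2E00 (a b c e : E) : mx2 a b c e 0 0 = a. Proof. by rewrite mxE. Qed.
Lemma mx2E01 (a b c e : E) : mx2 a b c e 0 1 = b. Proof. by rewrite mxE. Qed.
Lemma mx2E10 (a b c e : E) : mx2 a b c e 1 0 = c. Proof. by rewrite mxE. Qed.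
Lemma mx2E11 (a b c e : E) : mx2 a b c e 1 1 = e. Proof. by rewrite mxE. Qed.
Definition mx2E := (mx2E00, mx2E01, mx2E10, mx2E11).

Lemma mx2P g h : g 0 0 = h 0 0 -> g 0 1 = h 0 1 -> g 1 0 = h 1 0 -> g 1 1 = h 1 1 -> g = h.
Proof. by move=> *; apply/matrixP=> i j; case: (ord2_cases i) (ord2_cases j) => -> [] ->. Qed.

Lemma mx2_eta g : g = mx2 (g 0 0) (g 0 1) (g 1 0) (g 1 1).
Proof. by apply: mx2P; rewrite mx2E. Qed.

Lemma mx2_inj (a b c e a' b' c' e' : E) :
  mx2 a b c e = mx2 a' b' c' e' -> [/\ a = a', b = b', c = c' & e = e'].
Proof.
move=> eq_mx; have entry i j : mx2 a b c e i j = mx2 a' b' c' e' i j by rewrite eq_mx.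
by split; [move: (entry 0 0) | move: (entry 0 1) | move: (entry 1 0) | move: (entry 1 1)];
  rewrite !mx2E.
Qed.

Lemma mul_mx2 (a b c e a' b' c' e' : E) :
  mx2 a b c e *m mx2 a' b' c' e' =
  mx2 (a * a' + b * c') (a * b' + b * e') (c * a' + e * c') (c * b' + e * e').
Proof. by apply: mx2P; rewrite !mxE !big_ord_recr big_ord0 /= add0r !mxE. Qed.

Lemma add_mx2 (a b c e a' b' c' e' : E) :
  mx2 a b c e + mx2 a' b' c' e' = mx2 (a + a') (b + b') (c + c') (e + e').
Proof. by apply: mx2P; rewrite !mxE. Qed.

Lemma opp_mx2 (a b c e : E) : - mx2 a b c e = mx2 (- a) (- b) (- c) (- e).
Proof. by apply: mx2P; rewrite !mxE. Qed.

Lemma scalar_mx2 (l : E) : l%:M = mx2 l 0 0 l.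
Proof. by apply: mx2P; rewrite !mxE. Qed.

Lemma mxtrace_mx2 (a b c e : E) : \tr (mx2 a b c e) = a + e.
Proof. by rewrite /mxtrace !big_ord_recr big_ord0 /= add0r !mxE. Qed.

Lemma mulmx_wform : wform E *m wform E = 1%:M.
Proof. by rewrite mul_mx2 scalar_mx2; congr mx2; ring. Qed.

Lemma commute_mx2_aa (x y w : E) k : y != 0 ->
  k *m mx2 x y (w * y) x = mx2 x y (w * y) x *m k <-> exists a b, k = mx2 a b (w * b) a.
Proof.
move=> y0; split=> [|[a [b ->]]]; last by rewrite !mul_mx2; congr mx2; ring.
rewrite [k]mx2_eta !mul_mx2 => /mx2_inj[k00 k01 _ _].
exists (k 0 0), (k 0 1); congr mx2.
- by apply: (mulfI y0); apply: (addrI (x * k 0 0)); rewrite -k00; ring.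
- by apply: (mulfI y0); apply: (addrI (x * k 0 1)); rewrite -k01; ring.
Qed.

Lemma setmul_trans (A B C : 'M[E]_2 -> Prop) :
  (forall x y, C x -> C y -> C (x *m y)) -> (forall a, A a -> setmul B C a) ->
  forall g, setmul A C g -> setmul B C g.
Proof.
move=> CM AB g [a [c [Aa [Cc ->]]]]; have [b [c' [Bb [Cc' ->]]]] := AB a Aa.
by exists b, (c' *m c); rewrite mulmxA; do !split => //; apply: CM.
Qed.

Lemma setmul_iffl (A B : 'M[E]_2 -> Prop) {C : 'M[E]_2 -> Prop} : (forall x, A x <-> B x) ->
  forall g, setmul A C g <-> setmul B C g.
Proof.
by move=> AB g; split=> [] [a [c [Aa [Cc ->]]]]; exists a, c; split=> //; apply/AB.
Qed.

Variable sigma : {rmorphism E -> E}.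
Hypothesis sigmaK : involutive sigma.

Lemma adjm_mx2 (a b c e : E) :
  adjm sigma (mx2 a b c e) = mx2 (sigma a) (sigma c) (sigma b) (sigma e).
Proof. by apply: mx2P; rewrite !mxE. Qed.

Lemma adjmM g h : adjm sigma (g *m h) = adjm sigma h *m adjm sigma g.
Proof. by rewrite /adjm map_mxM trmx_mul. Qed.

Lemma inGM g h : inG sigma g -> inG sigma h -> inG sigma (g *m h).
Proof.
rewrite /inG adjmM => Gg Gh.
by rewrite -[in RHS]Gh -[X in _ *m X *m h]Gg !mulmxA.
Qed.

Lemma inG_cancel g k : inG sigma g -> inG sigma (g *m k) -> inG sigma k.
Proof.
by rewrite /inG adjmM => Gg; rewrite -[X in _ *m X *m k]Gg !mulmxA.
Qed.

Lemma inG_mx2 (a b c e : E) : inG sigma (mx2 a b c e) <->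
  [/\ sigma c * a + sigma a * c = 0, sigma c * b + sigma a * e = 1 &
      sigma e * b + sigma b * e = 0].
Proof.
rewrite /inG /wform adjm_mx2 !mul_mx2 !mulr0 !mulr1 !add0r !addr0.
split=> [/mx2_inj[]|[G00 G01 G11]] //; congr mx2 => //.
(* the (1,0) entry is the conjugate of the (0,1) entry *)
by rewrite -[1](rmorph1 sigma) -G01 rmorphD !rmorphM !sigmaK; ring.
Qed.

Lemma inG_scalar (l : E) : inG sigma l%:M <-> sigma l * l = 1.
Proof.
rewrite scalar_mx2 inG_mx2 rmorph0 !mul0r !mulr0 !add0r.
by split=> [[]|->].
Qed.

End Matrix2.

Section QuadraticExtension.
Variables (F E : fieldType) (nu : F -> int) (iota : {rmorphism F -> E})
  (eps : F) (s : E) (sigma : {rmorphism E -> E}).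
Hypotheses (HF : nonarch_local_field nu) (HE : unram_quad nu iota eps s sigma).
Local Notation PE := (pE nu iota s).

Lemma s_notin_F a : s != iota a.
Proof.
apply/eqP=> s_a; case/negP: (eps_nonsq HE a); apply/eqP/(fmorph_inj iota).
by rewrite rmorphXn -s_a (s_sq HE).
Qed.

Lemma s_neq0 : s != 0.
Proof. by have := s_notin_F 0; rewrite rmorph0. Qed.

Lemma iota_s_inj a b a' b' :
  iota a + iota b * s = iota a' + iota b' * s -> a = a' /\ b = b'.
Proof.
case: (eqVneq b b') => [<- eq_ab|neq_b eq_ab].
  by split=> //; apply: (fmorph_inj iota); apply: addIr eq_ab.
case/eqP: (s_notin_F ((a - a') / (b' - b))).
have bb'0 : iota (b' - b) != 0 by rewrite fmorph_eq0 subr_eq0 eq_sym.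
rewrite fmorph_div -[LHS](mulfK bb'0) !rmorphB; congr (_ / _).
by rewrite -[iota a](addrK (iota b * s)) eq_ab; ring.
Qed.

Lemma sigma_iota_s a b : sigma (iota a + iota b * s) = iota a - iota b * s.
Proof. by rewrite rmorphD rmorphM !(sigma_F HE) (sigma_s HE) mulrN. Qed.

Lemma sigmaK : involutive sigma.
Proof.
move=> x; have [a [b ->]] := E_span HE x.
by rewrite sigma_iota_s rmorphB rmorphM !(sigma_F HE) (sigma_s HE) mulrN opprK.
Qed.

Lemma pE0 n : PE n 0.
Proof. by exists 0, 0; rewrite rmorph0 mul0r addr0; split=> //; split; apply: inP0. Qed.

Lemma pE_iota n a : inP nu n a -> PE n (iota a).
Proof. by exists a, 0; rewrite rmorph0 mul0r addr0; split=> //; split=> //; apply: inP0. Qed.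

Lemma pE1 : PE 0 1.
Proof. by rewrite -(rmorph1 iota); apply/pE_iota/(inP1 HF). Qed.

Lemma pE_iotas n a : inP nu n a -> PE n (iota a * s).
Proof. by exists 0, a; rewrite rmorph0 add0r; split=> //; split=> //; apply: inP0. Qed.

Lemma pEW n m x : n <= m -> PE m x -> PE n x.
Proof.
by move=> le_nm [a [b [-> [ha hb]]]]; exists a, b; split=> //; split; apply: inPW le_nm _.
Qed.

Lemma pED n x y : PE n x -> PE n y -> PE n (x + y).
Proof.
move=> [a [b [-> [ha hb]]]] [a' [b' [-> [ha' hb']]]]; exists (a + a'), (b + b').
by rewrite !rmorphD; split; [ring | split; apply: (inPD HF)].
Qed.

Lemma pEN n x : PE n x -> PE n (- x).
Proof.
move=> [a [b [-> [ha hb]]]]; exists (- a), (- b).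
by rewrite !rmorphN; split; [ring | split; apply: (inPN HF)].
Qed.

Lemma pEB n x y : PE n x -> PE n y -> PE n (x - y).
Proof. by move=> hx /pEN; apply: pED. Qed.

Lemma pEM n m x y : PE n x -> PE m y -> PE (n + m) (x * y).
Proof.
move=> [a [b [-> [ha hb]]]] [a' [b' [-> [ha' hb']]]].
exists (a * a' + eps * (b * b')), (a * b' + b * a').
split; first by rewrite !rmorphD !rmorphM -(s_sq HE); ring.
have [eps0 nueps] := eps_unit HE.
split; apply: (inPD HF); try by apply: (inPM HF).
by apply: (inP_unitMl HF) => //; apply: (inPM HF).
Qed.

Lemma pEM_le k n m x y : k <= n + m -> PE n x -> PE m y -> PE k (x * y).
Proof. by move=> le_k hx hy; apply: pEW le_k (pEM hx hy). Qed.

Lemma pE_sigma n x : PE n x -> PE n (sigma x).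
Proof.
move=> [a [b [-> [ha hb]]]]; exists a, (- b).
by rewrite sigma_iota_s rmorphN mulNr; split=> //; split=> //; apply: (inPN HF).
Qed.

Lemma pE_iota_inv n a : PE n (iota a) -> inP nu n a.
Proof.
move=> [a' [b' [eq_a [ha _]]]].
suff [-> _] : a = a' /\ 0 = b' by [].
by apply: iota_s_inj; rewrite rmorph0 mul0r addr0.
Qed.

Lemma sigma_eqN m : sigma m = - m -> exists b, m = iota b * s.
Proof.
have [a [b ->]] := E_span HE m; rewrite sigma_iota_s => eqN.
exists b; suff -> : a = 0 by rewrite rmorph0 add0r.
have [two0 _] := residue_char_not2 HF.
have : iota (2 * a) = 0.
  by rewrite rmorphM rmorphMn rmorph1 -[RHS](subrr (iota a - iota b * s)) {2}eqN; ring.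
by move/eqP; rewrite fmorph_eq0 mulf_eq0 (negbTE two0) => /eqP.
Qed.

Lemma norm_iota_s a b :
  (iota a + iota b * s) * sigma (iota a + iota b * s) = iota (a ^+ 2 - eps * b ^+ 2).
Proof. by rewrite sigma_iota_s rmorphB !rmorphM -(s_sq HE); ring. Qed.

Lemma norm_in_F x : exists N, x * sigma x = iota N.
Proof. by have [a [b ->]] := E_span HE x; eexists; apply: norm_iota_s. Qed.

Lemma norm1_pE0 x : x * sigma x = 1 -> PE 0 x.
Proof.
have [a [b ->]] := E_span HE x; rewrite norm_iota_s -(rmorph1 iota) => /fmorph_inj ab1.
have [eps0 nueps] := eps_unit HE.
by have [ha hb] := norm1_integral HF eps0 nueps (eps_nonsq HE) ab1; exists a, b.
Qed.

Lemma inG_mx2_aa (a b : E) (w : F) : inG sigma (mx2 a b (iota w * b) a) <->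
  sigma a * b + sigma b * a = 0 /\ sigma a * a + iota w * (sigma b * b) = 1.
Proof.
rewrite inG_mx2; last exact: sigmaK.
rewrite rmorphM (sigma_F HE); split=> [[_ G01 G11] | [G11 G01]]; split=> //.
- by rewrite -G01 mulrA addrC.
- by rewrite -[RHS](mulr0 (iota w)) -G11; ring.
- by rewrite -G01 mulrA addrC.
Qed.

Lemma inG_mx2_aa_scale (a b : E) (w w' rho Nb : F) :
  inG sigma (mx2 a b (iota w * b) a) -> b * sigma b = iota Nb ->
  rho * rho * (1 + (w' - w) * Nb) = 1 ->
  inG sigma (mx2 (iota rho * a) (iota rho * b) (iota w' * (iota rho * b)) (iota rho * a)).
Proof.
move=> /inG_mx2_aa[ab_tr ab_norm] Nb_def rho2.
apply/inG_mx2_aa; rewrite !rmorphM !(sigma_F HE); split.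
  by rewrite -[RHS](mulr0 (iota rho * iota rho)) -ab_tr; ring.
have norm_w' : sigma a * a + iota w' * (sigma b * b) = iota (1 + (w' - w) * Nb).
  by rewrite rmorphD rmorph1 rmorphM rmorphB mulrC -Nb_def -ab_norm; ring.
by rewrite -(rmorph1 iota) -rho2 !rmorphM -norm_w'; ring.
Qed.

Definition mx_pE (n : int) (p q : nat) (A : 'M[E]_(p, q)) := forall i j, PE n (A i j).

Lemma mx_pE_mx2 n (a b c e : E) :
  mx_pE n (mx2 a b c e) <-> [/\ PE n a, PE n b, PE n c & PE n e].
Proof.
split=> [A_in|[? ? ? ?] i j].
  by split; [move: (A_in 0 0) | move: (A_in 0 1) | move: (A_in 1 0) | move: (A_in 1 1)];
    rewrite mx2E.
by case: (ord2_cases i) (ord2_cases j) => -> [] ->; rewrite mx2E.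
Qed.

Lemma mx_pEM n m p q r (A : 'M[E]_(p, q)) (B : 'M[E]_(q, r)) :
  mx_pE n A -> mx_pE m B -> mx_pE (n + m) (A *m B).
Proof.
move=> A_in B_in i j; rewrite mxE.
by apply: big_ind => [|x y|k _]; [apply: pE0 | apply: pED | apply: pEM].
Qed.

Lemma mx_pE_adjm n (g : 'M[E]_2) : mx_pE n g -> mx_pE n (adjm sigma g).
Proof. by move=> g_in i j; rewrite !mxE; apply: pE_sigma. Qed.

Lemma mx_pE_wform : mx_pE 0 (wform E).
Proof. by apply/mx_pE_mx2; split; [apply: pE0 | apply: pE1 | apply: pE1 | apply: pE0]. Qed.

Definition ginv (g : 'M[E]_2) := wform E *m adjm sigma g *m wform E.

Lemma ginvK (g : 'M[E]_2) : inG sigma g -> ginv g *m g = 1%:M.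
Proof. by rewrite /ginv -!mulmxA (mulmxA (adjm sigma g)) => ->; rewrite mulmx_wform. Qed.

Lemma mulmx_ginv (g : 'M[E]_2) : inG sigma g -> g *m ginv g = 1%:M.
Proof. by move/ginvK/mulmx1C. Qed.

Lemma mx_pE_ginv (g : 'M[E]_2) : mx_pE 0 g -> mx_pE 0 (ginv g).
Proof.
move=> g_int; have := mx_pEM (mx_pEM mx_pE_wform (mx_pE_adjm g_int)) mx_pE_wform.
by rewrite !addr0.
Qed.

Lemma inK_decomp m (g g' : 'M[E]_2) :
  inK nu iota s sigma g' -> inG sigma g -> mx_pE m (g - g') ->
  exists j, [/\ inG sigma j, mx_pE m (j - 1%:M) & g = g' *m j].
Proof.
move=> [Gg' g'_int] Gg gg'; exists (ginv g' *m g).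
have g'j : g' *m (ginv g' *m g) = g by rewrite mulmxA mulmx_ginv // mul1mx.
split=> //; first by apply: (inG_cancel Gg'); rewrite g'j.
rewrite -[m]add0r -{1}(ginvK Gg') -mulmxBr.
by apply: mx_pEM => //; apply: mx_pE_ginv.
Qed.

Section CentralizersModJ.
Variables (psi : E -> algC) (d : nat).
Hypotheses (Hpsi : add_char nu iota s psi) (d_gt0 : (0 < d)%N).
Local Notation inK := (inK nu iota s sigma).
Local Notation inJ := (inJ nu iota s sigma d).
Local Notation n := (Posz (uphalf d)).
Local Notation n' := (Posz (uphalf d.+1)).

Lemma uphalf_levels : [/\ 1 <= n, n <= n' & n + n' = Posz d + 1].
Proof. by have := odd_double_half d; rewrite -muln2 /= uphalf_half; split; lia. Qed.

Lemma inJ_congr1 j : inG sigma j -> mx_pE n' (j - 1%:M) -> inJ j.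
Proof.
move=> Gj j1; split=> //; exists (j 0 0), (j 0 1), (j 1 0), (j 1 1); split; first exact: mx2_eta.
have [_ le_nn' _] := uphalf_levels.
move: (j1 0 0) (j1 0 1) (j1 1 0) (j1 1 1); rewrite !mxE /= !subr0 => j00 j01 j10 j11.
by split; last split; last split; try apply: pEW le_nn' _.
Qed.

Lemma inJM j1 j2 : inJ j1 -> inJ j2 -> inJ (j1 *m j2).
Proof.
have [n_ge1 le_nn' nn'] := uphalf_levels.
move=> [G1 [a [b [c [e [Ej1 [ha [hb [hc he]]]]]]]]].
move=> [G2 [a' [b' [c' [e' [Ej2 [ha' [hb' [hc' he']]]]]]]]].
split; first exact: inGM.
rewrite Ej1 Ej2 mul_mx2; do 4!eexists; split; first by [].
split; [|split; [|split]].
- have -> : a * a' + b * c' - 1 = (a - 1) + (a' - 1) + (a - 1) * (a' - 1) + b * c' by ring.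
  apply: pED; last by apply: (pEM_le _ hb hc'); lia.
  by apply: pED; [apply: pED | apply: (pEM_le _ ha ha'); lia].
- have -> : a * b' + b * e' = b + b' + (a - 1) * b' + b * (e' - 1) by ring.
  apply: pED; last by apply: (pEM_le _ hb he'); lia.
  by apply: pED; [apply: pED | apply: (pEM_le _ ha hb'); lia].
- have -> : c * a' + e * c' = c + c' + c * (a' - 1) + (e - 1) * c' by ring.
  apply: pED; last by apply: (pEM_le _ he hc'); lia.
  by apply: pED; [apply: pED | apply: (pEM_le _ hc ha'); lia].
- have -> : c * b' + e * e' - 1 = (e - 1) + (e' - 1) + (e - 1) * (e' - 1) + c * b' by ring.
  apply: pED; last by apply: (pEM_le _ hc hb'); lia.
  by apply: pED; [apply: pED | apply: (pEM_le _ he he'); lia].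
Qed.

Lemma psiD_pE1 x y : PE 1 y -> psi (x + y) = psi x.
Proof. by move=> y_in; rewrite (psiD Hpsi) (psi_pE Hpsi y_in) mulr1. Qed.

Lemma PsiY_addJ (Y : 'M[E]_2) (z v : F) k :
  inP nu (- n + 1) z -> inP nu (- n + 1) v -> inJ k ->
  PsiY psi (Y + mx2 (iota z * s) 0 (iota v * s) (iota z * s)) k = PsiY psi Y k.
Proof.
move=> z_in v_in [_ [a [b [c [e [-> [ha [hb [hc he]]]]]]]]].
have [n_ge1 le_nn' _] := uphalf_levels.
rewrite /PsiY mulmxDl mxtraceD scalar_mx2 opp_mx2 add_mx2 mul_mx2 mxtrace_mx2 !oppr0 !addr0.
have zs_in := pE_iotas z_in; have vs_in := pE_iotas v_in.
apply: psiD_pE1; rewrite mul0r addr0; apply: pED; last apply: pED.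
- by apply: (pEM_le _ zs_in ha); lia.
- by apply: (pEM_le _ vs_in hb); lia.
- by apply: (pEM_le _ zs_in he); lia.
Qed.

Definition inTw (w : F) (k : 'M[E]_2) : Prop := inK k /\ exists a b, k = mx2 a b (iota w * b) a.

Lemma inT_inTw (x y : E) (w : F) k : y != 0 ->
  inT nu iota s sigma (mx2 x y (iota w * y) x) k <-> inTw w k.
Proof. by move=> y0; split=> [] [Kk /(commute_mx2_aa _ _ _ y0) k_aa]. Qed.

Lemma inTw_rescale (w w' : F) k : inP nu n' w -> inP nu n' w' -> inTw w k ->
  exists2 k', inTw w' k' & mx_pE n' (k - k').
Proof.
move=> w_in w'_in [[Gk k_int] [a [b k_ab]]]; rewrite k_ab in Gk k_int *.
have [n_ge1 le_nn' _] := uphalf_levels; have n'_ge1 : 1 <= n' by lia.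
have /mx_pE_mx2[a_int b_int _ _] := k_int.
have [Nb Nb_def] := norm_in_F b.
have Nb_int : inP nu 0 Nb.
  by apply: pE_iota_inv; rewrite -Nb_def -[0]addr0; apply: pEM => //; apply: pE_sigma.
have x_in : inP nu n' ((w' - w) * Nb).
  by rewrite -[n']addr0; apply: (inPM HF) => //; apply: (inPB HF).
have [rho rho1 rho2] := principal_unit_invsqrt HF n'_ge1 x_in.
have rho_in : inP nu 0 rho.
  by rewrite -(subrK 1 rho); apply: (inPD HF) (inP1 HF); apply: inPW rho1; lia.
have rho_int t : PE 0 t -> PE 0 (iota rho * t).
  by move=> t_int; apply: (pEM_le _ (pE_iota rho_in) t_int); rewrite addr0.
have rho_1 t : PE 0 t -> PE n' (t - iota rho * t).
  move=> t_int; have -> : t - iota rho * t = - (iota (rho - 1) * t).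
    by rewrite rmorphB rmorph1; ring.
  by apply/pEN/(pEM_le _ (pE_iota rho1) t_int); lia.
have wb_in (v : F) : inP nu n' v -> PE n' (iota v * b).
  by move=> v_in; apply: (pEM_le _ (pE_iota v_in) b_int); lia.
exists (mx2 (iota rho * a) (iota rho * b) (iota w' * (iota rho * b)) (iota rho * a)).
  split; last by exists (iota rho * a), (iota rho * b).
  split; first exact: inG_mx2_aa_scale Gk Nb_def rho2.
  apply/mx_pE_mx2; split; [exact: rho_int a_int | exact: rho_int b_int | | exact: rho_int a_int].
  by rewrite mulrCA; apply: rho_int; apply: pEW (wb_in _ w'_in); lia.
rewrite opp_mx2 add_mx2; apply/mx_pE_mx2.
split; [exact: rho_1 a_int | exact: rho_1 b_int | | exact: rho_1 a_int].
rewrite mulrCA; apply: pEB (wb_in _ w_in) _.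
by apply: (pEM_le _ (pE_iota rho_in) (wb_in _ w'_in)); rewrite add0r.
Qed.

Lemma inTw_subJ (w w' : F) k : inP nu n' w -> inP nu n' w' -> inTw w k ->
  setmul (inTw w') inJ k.
Proof.
move=> w_in w'_in Tk; have [k' Tk' kk'] := inTw_rescale w_in w'_in Tk.
have [j [Gj j1 ->]] := inK_decomp Tk'.1 Tk.1.1 kk'.
by exists k', j; split; last split; last by []; last apply: inJ_congr1.
Qed.

Lemma inU_mx2 (b : F) : PE 0 (s * iota b) -> inU nu iota s sigma (mx2 1 (s * iota b) 0 1).
Proof.
move=> b_int; split; first by exists b.
split; last by apply/mx_pE_mx2; split; [apply: pE1 | | apply: pE0 | apply: pE1].
apply/inG_mx2; first exact: sigmaK.
rewrite rmorph0 rmorph1 rmorphM (sigma_s HE) (sigma_F HE) !mul0r !mulr0 !mul1r !mulr1 !add0r.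
by split=> //; rewrite mulNr subrr.
Qed.

Lemma inTw0_ZU t : inTw 0 t <-> setmul (inZ sigma) (inU nu iota s sigma) t.
Proof.
split=> [[[Gt t_int] [a [b t_ab]]] | [_ [_ [[[l ->] Gl] [[[b0 ->] Ku] ->]]]]].
  move: Gt t_int; rewrite t_ab => /inG_mx2_aa[ab_tr]; rewrite rmorph0 mul0r addr0 => aa1.
  move=> /mx_pE_mx2[a_int b_int _ _].
  have [b0 b0_def] : exists b0, sigma a * b = iota b0 * s.
    apply: sigma_eqN; rewrite rmorphM sigmaK mulrC; apply/eqP.
    by rewrite -addr_eq0 addrC ab_tr.
  have Za : inZ sigma a%:M by split; [exists a | apply/(inG_scalar sigmaK)].
  exists a%:M, (mx2 1 (s * iota b0) 0 1); split=> //.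
  split; first by apply: inU_mx2; rewrite mulrC -b0_def; apply: (pEM_le _ (pE_sigma a_int) b_int).
  have ab : a * (sigma a * b) = b by rewrite mulrA [a * _]mulrC aa1 mul1r.
  by rewrite scalar_mx2 mul_mx2 [s * _]mulrC -b0_def; congr mx2; rewrite ?ab; ring.
have l_int : PE 0 l by apply: norm1_pE0; rewrite mulrC; apply/(inG_scalar sigmaK).
have lM_int : mx_pE 0 (l%:M : 'M[E]_2).
  by rewrite scalar_mx2; apply/mx_pE_mx2; split=> //; apply: pE0.
split; first split.
- by apply: inGM Gl Ku.1.
- by have := mx_pEM lM_int Ku.2; rewrite addr0.
- by exists l, (l * (s * iota b0)); rewrite scalar_mx2 mul_mx2 rmorph0; congr mx2; ring.
Qed.

Lemma inP_div_nu (u v : F) : inP nu (- n + 1) v -> u != 0 -> nu u = - Posz d ->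
  inP nu n' (v / u).
Proof.
move=> v_in u0 nu_u; have [_ _ nn'] := uphalf_levels.
have u_in : inP nu (Posz d) u^-1 by right; rewrite (nuV HF u0) nu_u opprK.
by apply: inPW (inPM HF v_in u_in); lia.
Qed.

Lemma setmul_inTwJ (w w' : F) : inP nu n' w -> inP nu n' w' ->
  forall g, setmul (inTw w) inJ g <-> setmul (inTw w') inJ g.
Proof.
move=> w_in w'_in g; split; apply: setmul_trans inJM _ g => k; exact: inTw_subJ.
Qed.

End CentralizersModJ.
End QuadraticExtension.

Unset Implicit Arguments.

Theorem lemma5p9 (F E : fieldType) (nu : F -> int) (iota : {rmorphism F -> E})
    (eps : F) (s : E) (sigma : {rmorphism E -> E}) (psi : E -> algC)
    (HF : nonarch_local_field nu) (HE : unram_quad nu iota eps s sigma)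
    (Hpsi : add_char nu iota s psi)
    (d : nat) (z u v : F) :
  (0 < d)%N ->
  let X := mx2 (iota z * s) (iota u * s) (iota v * s) (iota z * s) in
  let Xu := mx2 0 (iota u * s) 0 0 in
  in_kfrak nu iota s sigma d X ->
  inP nu (- Posz (uphalf d) + 1) z ->
  inP nu (- Posz (uphalf d) + 1) v ->
  u != 0 -> nu u = - Posz d ->
  (forall k, inJ nu iota s sigma d k -> PsiY psi X k = PsiY psi Xu k) /\
  (forall g, setmul (inT nu iota s sigma X) (inJ nu iota s sigma d) g <->
             setmul (inT nu iota s sigma Xu) (inJ nu iota s sigma d) g) /\
  (forall g, setmul (inT nu iota s sigma Xu) (inJ nu iota s sigma d) g <->
             setmul (setmul (inZ sigma) (inU nu iota s sigma)) (inJ nu iota s sigma d) g).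
Proof.
move=> d_gt0 X Xu _ z_in v_in u0 nu_u.
have us0 : iota u * s != 0 by rewrite mulf_neq0 ?fmorph_eq0 ?(s_neq0 HE).
have TX k : inT nu iota s sigma X k <-> inTw nu iota s sigma (v / u) k.
  have -> : X = mx2 (iota z * s) (iota u * s) (iota (v / u) * (iota u * s)) (iota z * s).
    by rewrite /X fmorph_div mulrA divfK ?fmorph_eq0.
  exact: inT_inTw.
have TXu k : inT nu iota s sigma Xu k <-> inTw nu iota s sigma 0 k.
  have -> : Xu = mx2 0 (iota u * s) (iota 0 * (iota u * s)) 0 by rewrite rmorph0 mul0r.
  exact: inT_inTw.
split.
  have -> : X = Xu + mx2 (iota z * s) 0 (iota v * s) (iota z * s).
    by rewrite /X /Xu add_mx2 !add0r addr0.
  by move=> k; apply: (PsiY_addJ HF HE Hpsi d_gt0).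
split=> g.
  apply: iff_trans (setmul_iffl TX g) (iff_trans _ (iff_sym (setmul_iffl TXu g))).
  exact: (setmul_inTwJ HF HE d_gt0 (inP_div_nu HF d_gt0 v_in u0 nu_u) (inP0 _ _) g).
exact: setmul_iffl (fun t => iff_trans (TXu t) (inTw0_ZU HF HE t)) g.
Qed.
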